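(* Let $\ell\in\mathbb{R}$ and $p\in(0,1)$, and let $\tilde X$ be drawn with probability $p$ from the law of $X\sim N(0,1)$ conditioned on $X>\ell$, and with probability $1-p$ from the law of $X\sim N(0,1)$ conditioned on $X\le\ell$. Then for every $t>0$, $\Pr[|\tilde X|>t]\le2\exp(-t^2/K_1^2)$ where $K_1=\max\{\sqrt{20},|\ell|\sqrt{10}\}$. In particular, $\|\tilde X\|_{\psi_2}=O(\max\{1,|\ell|\})$.
   Context: The subgaussian norm is $\|X\|_{\psi_2}:=\inf\{t>0:\mathbb{E}[\exp(X^2/t^2)]\le2\}$. *)

From HB Require Import structures.
From mathcomp Require Import all_boot all_order all_algebra.
From mathcomp Require Import all_classical all_reals all_analysis.
Set Implicit Arguments. Unset Strict Implicit. Unset Printing Implicit Defensive.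
Import Order.TTheory GRing.Theory Num.Theory.
Local Open Scope classical_set_scope.
Local Open Scope ring_scope.

Definition gauss {R : realType} : set R -> \bar R := normal_prob 0 1.

Definition cond_gauss {R : realType} (B A : set R) : R :=
  fine (gauss (A `&` B)) / fine (gauss B).

Definition cond_gauss_expect {R : realType} (B : set R) (g : R -> R) : \bar R :=
  ((fine (gauss B))^-1%:E * \int[@gauss R]_(x in B) (g x)%:E)%E.

Definition above {R : realType} (l : R) : set R := `]l, +oo[.
Definition below {R : realType} (l : R) : set R := `]-oo, l].

Definition tilde_law {R : realType} (l p : R) (A : set R) : R :=
  p * cond_gauss (above l) A + (1 - p) * cond_gauss (below l) A.

Definition tilde_expect {R : realType} (l p : R) (g : R -> R) : \bar R :=
  (p%:E * cond_gauss_expect (above l) g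
   + (1 - p)%:E * cond_gauss_expect (below l) g)%E.

(* Subgaussian norm of tilde X:  inf { t > 0 : E[exp(tildeX^2/t^2)] <= 2 }
   (taken in \bar R, so it is +oo if the set is empty). *)
Definition tilde_psi2 {R : realType} (l p : R) : \bar R :=
  ereal_inf [set t%:E | t in [set t : R | 0 < t /\
     (tilde_expect l p (fun x => expR (x ^+ 2 / t ^+ 2)) <= 2%:E)%E]].

Definition K1 {R : realType} (l : R) : R :=
  Num.max (Num.sqrt 20) (`|l| * Num.sqrt 10).

From HB Require Import structures.
From mathcomp Require Import all_boot all_order all_algebra.
From mathcomp Require Import all_classical all_reals all_analysis.
From mathcomp Require Import measurable_realfun normal_distribution.
From mathcomp Require Import ring lra.
Set Implicit Arguments.
Unset Strict Implicit.
Unset Printing Implicit Defensive.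
Import Order.TTheory GRing.Theory Num.Theory.
Import numFieldTopology.Exports.
Local Open Scope classical_set_scope.
Local Open Scope ring_scope.

(* Write phi for the standard normal density.  Everything rests on one
   exponential-moment estimate on the half-lines H = [l, +oo[ and ]-oo, l]:
     \int_H e^(lam x^2) phi(x) dx <= 4 P[X \in H]  when 0 <= lam <= 1/10 and lam l^2 <= 1/5.
   On [l, +oo[ substitute x = l + c (y - l) with c = 1 / (1 - 2 lam) >= 1: completing
   the square gives c e^(lam x^2) phi(x) <= c e^(lam l^2) phi(y) for y >= l, and
   c e^(lam l^2) <= (5/4) e^(1/5) <= 4; ]-oo, l] follows by the symmetry of phi.
   With lam = 2 / K1^2, Markov's inequality bounds P[|X| > t | X \in H] by
   min(1, 4 e^(-2 t^2 / K1^2)) <= 2 e^(-t^2 / K1^2), and mixing the two halves keeps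
   the bound.  With lam = 4 / t^2 and y <= 1 + y^4 / 4, E[e^(X^2 / t^2) | X \in H]
   <= 1 + 4 / 4 = 2 as soon as t = 7 max(1, |l|). *)

Local Notation mu := lebesgue_measure.

Section gaussian_density.
Context {R : realType}.
Local Notation phi := (@normal_pdf R 0 1).

Lemma normal_pdf01E (x : R) : phi x = normal_peak 1 * expR (- x ^+ 2 / 2).
Proof. by rewrite /normal_pdf oner_eq0 /normal_fun subr0 expr1n mulNr. Qed.

Lemma normal_pdf01N (x : R) : phi (- x) = phi x.
Proof. by rewrite !normal_pdf01E sqrrN. Qed.

Lemma continuous_normal_pdf01 : continuous phi.
Proof. exact/continuous_normal_pdf/oner_neq0. Qed.

Lemma continuous_expR_sqr_normal_pdf01 (lam : R) :
  continuous (fun x : R => expR (lam * x ^+ 2) * phi x).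
Proof.
move=> x; apply: cvgM; last exact: continuous_normal_pdf01.
apply: continuous_comp; last exact: continuous_expR.
by apply: cvgM; [exact: cvg_cst | exact: exprn_continuous].
Qed.

End gaussian_density.

Lemma continuous_measurable_EFin {R : realType} (D : set R) (f : R -> R) :
  continuous f -> measurable_fun D (EFin \o f).
Proof.
move=> cf; apply/measurable_EFinP/measurable_funTS.
exact: continuous_measurable_fun.
Qed.

Lemma continuous_affine_about {R : realType} (l c : R) :
  continuous (fun x : R => l + c * (x - l)).
Proof.
move=> x; apply: cvgD; first exact: cvg_cst.
by apply: cvgM; [exact: cvg_cst | apply: cvgB; [exact: cvg_id | exact: cvg_cst]].
Qed.

Lemma ge0_integral_itvcy_affine {R : realType} (f : R -> R) (l c : R) :
  0 < c -> continuous f -> (forall x, 0 <= f x) ->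
  (\int[mu]_(x in `[l, +oo[) (f x)%:E =
   \int[mu]_(x in `[l, +oo[) (f (l + c * (x - l)) * c)%:E)%E.
Proof.
move=> c0 cf f0.
pose F x := l + c * (x - l).
have dF : F^`()%classic = cst c.
  apply/funext => x; rewrite derive1E deriveD// deriveM// deriveB// !derive_cst.
  by rewrite derive_id subr0 scaler0 addr0 add0r /= [LHS]mulr1.
have {1}-> : l = F l by rewrite /F subrr mulr0 addr0.
rewrite increasing_ge0_integration_by_substitutiony.
- by apply: eq_integral => x _; rewrite dF.
- by move=> x y _ _ xy; rewrite /F ltrD2l ltr_pM2l // ltrD2r.
- by rewrite dF => x _; exact: cst_continuous.
- by rewrite dF; exact: is_cvg_cst.
- by rewrite dF; exact: is_cvg_cst.
- split; first by move=> x _; rewrite /F.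
  exact/cvg_at_right_filter/continuous_affine_about.
- have -> : F = fun x => c * (x + (l / c - l)).
    by apply/funext => x; rewrite /F; field; rewrite gt_eqF.
  by apply: gt0_cvgMry => //; exact: cvg_addrr.
- exact/continuous_subspaceT.
- by move=> x _; exact: f0.
Qed.

Section expR_sqr_moment.
Context {R : realType}.
Local Notation phi := (@normal_pdf R 0 1).

Definition expR_sqr_moment_le4 (lam : R) (B : set R) : Prop :=
  (\int[mu]_(x in B) (expR (lam * x ^+ 2) * phi x)%:E <= 4%:E * gauss B)%E.

Lemma expR_sqr_normal_pdf01_shift_le (lam l x : R) : 0 <= lam < 2^-1 -> l <= x ->
  expR (lam * (l + (1 - 2 * lam)^-1 * (x - l)) ^+ 2) *
    phi (l + (1 - 2 * lam)^-1 * (x - l)) <= expR (lam * l ^+ 2) * phi x.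
Proof.
move=> /andP[lam0 lam1] lx; set c := (1 - 2 * lam)^-1.
have c1 : (1 - 2 * lam) * c = 1 by rewrite divff //; apply/eqP; lra.
have c_ge1 : 1 <= c by rewrite -[leLHS]c1 ler_piMl ?invr_ge0; lra.
rewrite !normal_pdf01E !(mulrCA (expR _)) -!expRD.
apply: ler_wpM2l; first exact: normal_peak_ge0.
rewrite ler_expR; set d := x - l.
have -> : x = l + d by rewrite /d addrC subrK.
have h1 : (1 - 2 * lam) * c * l * d = l * d by rewrite c1 mul1r.
have h2 : (1 - 2 * lam) * c * c * d ^+ 2 = c * d ^+ 2 by rewrite c1 mul1r.
have h3 : 0 <= (c - 1) * d ^+ 2 by rewrite mulr_ge0 ?sqr_ge0 // subr_ge0.
nra.
Qed.

Lemma substitution_factor_le4 (lam l : R) : 0 <= lam <= 10^-1 -> lam * l ^+ 2 <= 5^-1 ->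
  (1 - 2 * lam)^-1 * expR (lam * l ^+ 2) <= 4.
Proof.
move=> /andP[lam0 lam1] laml; set c := (1 - 2 * lam)^-1.
have c0 : 0 < c by rewrite invr_gt0; lra.
have c1 : (1 - 2 * lam) * c = 1 by rewrite divff //; apply/eqP; lra.
have e1 : expR (lam * l ^+ 2) <= expR 5^-1 by rewrite ler_expR.
have e2 : 4 / 5 <= expR (- 5^-1 : R) by apply: le_trans (expR_ge1Dx _); lra.
have e3 : expR (5^-1 : R) * expR (- 5^-1) = 1 by rewrite -expRD subrr expR0.
have := expR_gt0 (5^-1 : R); have := expR_gt0 (lam * l ^+ 2).
nra.
Qed.

Lemma expR_sqr_moment_le4_itvcy (lam l : R) :
  0 <= lam <= 10^-1 -> lam * l ^+ 2 <= 5^-1 -> expR_sqr_moment_le4 lam `[l, +oo[.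
Proof.
move=> lam_bd laml; have /andP[lam0 lam1] := lam_bd.
set c := (1 - 2 * lam)^-1; have c0 : 0 < c by rewrite invr_gt0; lra.
set M := c * expR (lam * l ^+ 2).
have g0 x : 0 <= expR (lam * x ^+ 2) * phi x by rewrite mulr_ge0 ?expR_ge0 ?normal_pdf_ge0.
rewrite /expR_sqr_moment_le4.
rewrite (ge0_integral_itvcy_affine l c0 (@continuous_expR_sqr_normal_pdf01 _ lam) g0).
apply: (@le_trans _ _ (\int[mu]_(x in `[l, +oo[) (M * phi x)%:E)%E).
  apply: ge0_le_integral => //.
  - by move=> x _; rewrite lee_fin mulr_ge0 // ltW.
  - have cgF : continuous (fun x : R =>
        expR (lam * (l + c * (x - l)) ^+ 2) * phi (l + c * (x - l))).
      move=> x; apply: (@continuous_comp _ _ _ (fun x : R => l + c * (x - l))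
        (fun y => expR (lam * y ^+ 2) * phi y)); first exact: continuous_affine_about.
      exact: continuous_expR_sqr_normal_pdf01.
    by apply: continuous_measurable_EFin => x; apply: cvgM; [exact: cgF | exact: cvg_cst].
  - apply: continuous_measurable_EFin => x.
    by apply: cvgM; [exact: cvg_cst | exact: continuous_normal_pdf01].
  - move=> x; rewrite /= in_itv /= andbT => lx; rewrite lee_fin /M mulrC -mulrA.
    by rewrite ler_wpM2l ?(ltW c0) // expR_sqr_normal_pdf01_shift_le //; lra.
under eq_integral do rewrite EFinM.
rewrite ge0_integralZl_EFin //.
- apply: lee_wpmul2r; first exact: (measure_ge0 (@gauss R)).
  by rewrite lee_fin substitution_factor_le4.
- by move=> x _; rewrite lee_fin normal_pdf_ge0.
- exact: continuous_measurable_EFin continuous_normal_pdf01.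
- by rewrite mulr_ge0 ?expR_ge0 // ltW.
Qed.

Lemma expR_sqr_moment_le4_above (lam l : R) :
  0 <= lam <= 10^-1 -> lam * l ^+ 2 <= 5^-1 -> expR_sqr_moment_le4 lam (above l).
Proof.
move=> lam_bd laml; rewrite /expR_sqr_moment_le4 /gauss /normal_prob /above.
rewrite !integral_itv_obnd_cbnd; first exact: expR_sqr_moment_le4_itvcy.
- exact: continuous_measurable_EFin continuous_normal_pdf01.
- exact: continuous_measurable_EFin (@continuous_expR_sqr_normal_pdf01 _ lam).
Qed.

Lemma expR_sqr_moment_le4_below (lam l : R) :
  0 <= lam <= 10^-1 -> lam * l ^+ 2 <= 5^-1 -> expR_sqr_moment_le4 lam (below l).
Proof.
move=> lam_bd laml; rewrite /expR_sqr_moment_le4 /gauss /normal_prob /below.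
rewrite -[l]opprK !ge0_integration_by_substitutionNy.
- under eq_integral do rewrite /= normal_pdf01N sqrrN.
  under [X in (_ <= _ * X)%E]eq_integral do rewrite /= normal_pdf01N.
  by apply: expR_sqr_moment_le4_itvcy; rewrite // sqrrN.
- exact/continuous_subspaceT/continuous_normal_pdf01.
- by move=> x _; exact: normal_pdf_ge0.
- exact/continuous_subspaceT/continuous_expR_sqr_normal_pdf01.
- by move=> x _; rewrite mulr_ge0 ?expR_ge0 ?normal_pdf_ge0.
Qed.

End expR_sqr_moment.

Section conditioned_gauss.
Context {R : realType}.
Local Notation phi := (@normal_pdf R 0 1).

Lemma gauss_fin_num (B : set R) : measurable B -> (gauss B \is a fin_num)%E.
Proof.
move=> mB; rewrite ge0_fin_numE; last exact: measure_ge0.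
by apply: (le_lt_trans (probability_le1 (@gauss R) mB)); rewrite ltry.
Qed.

Lemma ge0_integral_gauss (B : set R) (f : R -> \bar R) : measurable B ->
  measurable_fun B f -> (forall x, 0 <= f x)%E ->
  (\int[@gauss R]_(x in B) f x = \int[mu]_(x in B) (f x * (phi x)%:E))%E.
Proof.
move=> mB mf f0.
(* [gauss] lives on the default measurable structure of [R], Lebesgue measure on
   [measurableTypeR R]; the pushforward along [id] identifies the two. *)
have mid : measurable_fun (T := measurableTypeR R) (U := R) setT id.
  by move=> _ A mA; rewrite setTI.
rewrite (ge0_integral_pushforward mid (normal_prob 0 1) mB mf (fun y _ => f0 y)).
have gauss_ac : normal_prob (0 : R) 1 `<< mu by exact: normal_prob_dominates.
rewrite -(Radon_Nikodym_SigmaFinite.change_of_variables gauss_ac f0 mB mf).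
have intRN := Radon_Nikodym_SigmaFinite.f_integrable gauss_ac.
have mpdf : measurable_fun B (fun x => (phi x)%:E).
  exact: continuous_measurable_EFin continuous_normal_pdf01.
apply: ae_eq_integral => //.
- apply: emeasurable_funM => //.
  by apply: measurable_funTS; exact: measurable_int intRN.
- exact: emeasurable_funM.
apply: ae_eqe_mul2l; apply: integral_ae_eq => //.
- exact: integrableS intRN.
- move=> E EB mE.
  by rewrite -(Radon_Nikodym_SigmaFinite.f_integral gauss_ac mE).
Qed.

Lemma cond_gauss_ge0 (B A : set R) : 0 <= cond_gauss B A.
Proof. by rewrite /cond_gauss divr_ge0 // fine_ge0 // measure_ge0. Qed.

Lemma cond_gauss_le (B A : set R) (r : R) : measurable B -> measurable A ->
  0 <= r -> (gauss (A `&` B) <= r%:E * gauss B)%E -> cond_gauss B A <= r.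
Proof.
move=> mB mA r0 le_AB; rewrite /cond_gauss.
have [->|gB0] := eqVneq (fine (gauss B)) 0; first by rewrite invr0 mulr0.
have gB : 0 < fine (gauss B) by rewrite lt_neqAle eq_sym gB0 fine_ge0 // measure_ge0.
rewrite ler_pdivrMr // -lee_fin EFinM !fineK //; first exact: gauss_fin_num.
exact/gauss_fin_num/measurableI.
Qed.

Lemma cond_gauss_le1 (B A : set R) : measurable B -> measurable A -> cond_gauss B A <= 1.
Proof.
move=> mB mA; apply: cond_gauss_le => //; rewrite mul1e.
exact: measureIr.
Qed.

Lemma measurable_abs_gt (t : R) : measurable [set x : R | t < `|x|].
Proof.
have := normr_measurable measurableT (measurable_itv `]t, +oo[).
by rewrite setTI; congr measurable; apply/seteqP; split => x /=; rewrite in_itv /= andbT.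
Qed.

Lemma gauss_abs_gtI_le (B : set R) (lam t : R) : measurable B -> 0 <= lam -> 0 <= t ->
  (gauss ([set x : R | (t < `|x|)%R] `&` B) <=
   (expR (- lam * t ^+ 2))%:E * \int[mu]_(x in B) (expR (lam * x ^+ 2) * phi x)%:E)%E.
Proof.
move=> mB lam0 t0.
have mAB : measurable ([set x : R | t < `|x|] `&` B).
  by apply: measurableI => //; exact: measurable_abs_gt.
have g0 x : 0 <= expR (lam * x ^+ 2) * phi x by rewrite mulr_ge0 ?expR_ge0 ?normal_pdf_ge0.
have mg : measurable_fun B (fun x => (expR (lam * x ^+ 2) * phi x)%:E).
  exact: continuous_measurable_EFin (@continuous_expR_sqr_normal_pdf01 _ lam).
rewrite -ge0_integralZl_EFin ?expR_ge0 //; last by move=> x _; rewrite lee_fin.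
apply: (@le_trans _ _ (\int[mu]_(x in [set x : R | (t < `|x|)%R] `&` B)
    ((expR (- lam * t ^+ 2))%:E * (expR (lam * x ^+ 2) * phi x)%:E))%E).
  apply: ge0_le_integral => //.
  - by move=> x _; rewrite lee_fin normal_pdf_ge0.
  - exact: continuous_measurable_EFin continuous_normal_pdf01.
  - by apply: emeasurable_funM => //; exact: measurable_funS mg.
  - move=> x [/= tx _]; rewrite -EFinM lee_fin mulrA -expRD.
    rewrite -[leLHS]mul1r ler_wpM2r ?normal_pdf_ge0 // -expR0 ler_expR.
    have : t ^+ 2 <= x ^+ 2.
      by rewrite -(real_normK (num_real x)); have := normr_ge0 x; nra.
    nra.
apply: ge0_subset_integral => //; first exact: emeasurable_funM.
by move=> x _; rewrite mule_ge0 // lee_fin ?expR_ge0.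
Qed.

Lemma cond_gauss_abs_gt_le (B : set R) (lam t : R) : measurable B ->
  0 <= lam -> 0 <= t -> expR_sqr_moment_le4 lam B ->
  cond_gauss B [set x | t < `|x|] <= 4 * expR (- lam * t ^+ 2).
Proof.
move=> mB lam0 t0 momB.
apply: cond_gauss_le => //; first exact: measurable_abs_gt.
apply: (le_trans (gauss_abs_gtI_le mB lam0 t0)).
by rewrite (mulrC 4) EFinM -muleA; apply: lee_wpmul2l; rewrite ?lee_fin ?expR_ge0.
Qed.

Lemma cond_gauss_expect_le (B : set R) (g : R -> R) (r : R) : measurable B -> 0 <= r ->
  (\int[@gauss R]_(x in B) (g x)%:E <= r%:E * gauss B)%E ->
  (cond_gauss_expect B g <= r%:E)%E.
Proof.
move=> mB r0 le_gB; rewrite /cond_gauss_expect.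
have [->|gB0] := eqVneq (fine (gauss B)) 0; first by rewrite invr0 mul0e lee_fin.
have gB : 0 < fine (gauss B) by rewrite lt_neqAle eq_sym gB0 fine_ge0 // measure_ge0.
rewrite -(fineK (gauss_fin_num mB)) -EFinM in le_gB.
have -> : r = (fine (gauss B))^-1 * (r * fine (gauss B)) by rewrite mulrCA mulVf ?mulr1 ?gt_eqF.
by rewrite EFinM; apply: lee_wpmul2l; rewrite // lee_fin invr_ge0 ltW.
Qed.

Lemma ler_1Dexpr4 (y : R) : y <= 1 + y ^+ 4 / 4.
Proof.
have : 0 <= (y - 1) ^+ 2 * ((y + 1) ^+ 2 + 2).
  by rewrite mulr_ge0 ?sqr_ge0 // addr_ge0 ?sqr_ge0.
nra.
Qed.

Lemma cond_gauss_expect_expR_sqr_le2 (B : set R) (u : R) : measurable B ->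
  expR_sqr_moment_le4 (4 * u) B ->
  (cond_gauss_expect B (fun x => expR (x ^+ 2 * u)) <= 2%:E)%E.
Proof.
move=> mB momB; apply: cond_gauss_expect_le => //.
have g0 x : 0 <= expR (4 * u * x ^+ 2) * phi x by rewrite mulr_ge0 ?expR_ge0 ?normal_pdf_ge0.
have mphi : measurable_fun B (fun x => (phi x)%:E).
  exact: continuous_measurable_EFin continuous_normal_pdf01.
have mg : measurable_fun B (fun x => (expR (4 * u * x ^+ 2) * phi x)%:E).
  exact: continuous_measurable_EFin (@continuous_expR_sqr_normal_pdf01 _ (4 * u)).
have mf : measurable_fun B (fun x => (expR (x ^+ 2 * u))%:E).
  apply: (continuous_measurable_EFin (f := fun x : R => expR (x ^+ 2 * u))) => x.
  apply: continuous_comp; last exact: continuous_expR.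
  by apply: cvgM; [exact: exprn_continuous | exact: cvg_cst].
rewrite ge0_integral_gauss //.
apply: (@le_trans _ _ (\int[mu]_(x in B)
    ((phi x)%:E + 4^-1%:E * (expR (4 * u * x ^+ 2) * phi x)%:E))%E).
  apply: ge0_le_integral => //.
  - by move=> x _; rewrite -EFinM lee_fin mulr_ge0 ?expR_ge0 ?normal_pdf_ge0.
  - exact: emeasurable_funM.
  - by apply: emeasurable_funD => //; exact: emeasurable_funM.
  - move=> x _; rewrite -!EFinM -EFinD lee_fin.
    have := ler_1Dexpr4 (expR (x ^+ 2 * u)); rewrite -expRM_natl.
    have -> : 4%:R * (x ^+ 2 * u) = 4 * u * x ^+ 2 by ring.
    by have := normal_pdf_ge0 0 1 x; nra.
rewrite ge0_integralD //; last 3 first.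
- by move=> x _; rewrite lee_fin normal_pdf_ge0.
- by move=> x _; rewrite mule_ge0 // lee_fin.
- exact: emeasurable_funM.
rewrite ge0_integralZl_EFin //; last by move=> x _; rewrite lee_fin.
apply: (le_trans (leeD2l _ (lee_wpmul2l _ momB))); first by rewrite lee_fin.
rewrite -[X in (X + _)%E]/(gauss B) -(fineK (gauss_fin_num mB)) -!EFinM -EFinD lee_fin.
lra.
Qed.

End conditioned_gauss.

Section tilde_gauss.
Context {R : realType}.

Lemma sqr_K1_ge20 (l : R) : 20 <= K1 l ^+ 2.
Proof.
have le_K1 : Num.sqrt 20 <= K1 l by rewrite /K1 le_max lexx.
rewrite -[leLHS](@sqr_sqrtr _ 20) // ler_sqr ?nnegrE ?sqrtr_ge0 //.
exact: le_trans (sqrtr_ge0 _) le_K1.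
Qed.

Lemma sqr_K1_ge10sqr (l : R) : 10 * l ^+ 2 <= K1 l ^+ 2.
Proof.
have le_K1 : `|l| * Num.sqrt 10 <= K1 l by rewrite /K1 le_max lexx orbT.
have ge0_l10 : 0 <= `|l| * Num.sqrt 10 by rewrite mulr_ge0 ?sqrtr_ge0.
rewrite -real_normK ?num_real // mulrC -[10](@sqr_sqrtr _ 10) // -exprMn.
by rewrite ler_sqr ?nnegrE // (le_trans ge0_l10).
Qed.

Lemma cond_gauss_abs_gt_subgauss (B : set R) (K t : R) : measurable B -> 0 < K -> 0 <= t ->
  expR_sqr_moment_le4 (2 / K) B ->
  cond_gauss B [set x | t < `|x|] <= 2 * expR (- t ^+ 2 / K).
Proof.
move=> mB K0 t0 momB.
have le1 := cond_gauss_le1 mB (measurable_abs_gt t).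
have := cond_gauss_abs_gt_le mB (divr_ge0 (ler0n _ 2) (ltW K0)) t0 momB.
have -> : expR (- (2 / K) * t ^+ 2) = expR (- t ^+ 2 / K) ^+ 2.
  by rewrite -expRM_natl; congr expR; ring.
have := expR_gt0 (- t ^+ 2 / K).
(* min(1, 4 s^2) <= 2 s: use the first bound when s >= 1/2, the second otherwise. *)
set s := expR _; have [hs|hs] := leP s (2^-1); nra.
Qed.

Lemma tilde_law_abs_gt_le (l p t : R) : 0 <= p <= 1 -> 0 < t ->
  tilde_law l p [set x | t < `|x|] <= 2 * expR (- t ^+ 2 / K1 l ^+ 2).
Proof.
move=> /andP[p0 p1] t0.
have K20 := sqr_K1_ge20 l; have K2l := sqr_K1_ge10sqr l.
have K0 : 0 < K1 l ^+ 2 by lra.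
have lam_bd : 0 <= 2 / K1 l ^+ 2 <= 10^-1.
  apply/andP; split; first by rewrite divr_ge0 // ltW.
  by rewrite (ler_pdivrMr _ _ K0); lra.
have laml : 2 / K1 l ^+ 2 * l ^+ 2 <= 5^-1 by rewrite mulrAC (ler_pdivrMr _ _ K0); lra.
have := cond_gauss_abs_gt_subgauss (measurable_itv _) K0 (ltW t0)
  (expR_sqr_moment_le4_above lam_bd laml).
have := cond_gauss_abs_gt_subgauss (measurable_itv _) K0 (ltW t0)
  (expR_sqr_moment_le4_below lam_bd laml).
have := cond_gauss_ge0 (above l) [set x | t < `|x|].
have := cond_gauss_ge0 (below l) [set x | t < `|x|].
rewrite /tilde_law; nra.
Qed.

Lemma tilde_psi2_le (l p : R) : 0 <= p <= 1 ->
  (tilde_psi2 l p <= (7 * Num.max 1 `|l|)%:E)%E.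
Proof.
move=> /andP[p0 p1]; set m := Num.max 1 `|l|; set t := 7 * m.
have m1 : 1 <= m by rewrite le_max lexx.
have ml : `|l| <= m by rewrite le_max lexx orbT.
have t0 : 0 < t by rewrite /t; lra.
have t2 : 49 <= t ^+ 2 by rewrite /t; nra.
have t2l : 49 * l ^+ 2 <= t ^+ 2.
  by rewrite /t -real_normK ?num_real //; have := normr_ge0 l; nra.
set u := (t ^+ 2)^-1.
have tu : t ^+ 2 * u = 1 by rewrite divff // gt_eqF // exprn_gt0.
have u0 : 0 < u by rewrite invr_gt0 exprn_gt0.
have lam_bd : 0 <= 4 * u <= 10^-1 by apply/andP; split; nra.
have laml : 4 * u * l ^+ 2 <= 5^-1 by nra.
have e_above := cond_gauss_expect_expR_sqr_le2 (measurable_itv _)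
  (expR_sqr_moment_le4_above lam_bd laml).
have e_below := cond_gauss_expect_expR_sqr_le2 (measurable_itv _)
  (expR_sqr_moment_le4_below lam_bd laml).
apply: ereal_inf_lbound; exists t => //; split => //.
apply: (le_trans (leeD (lee_wpmul2l _ e_above) (lee_wpmul2l _ e_below))).
all: by rewrite ?lee_fin //; lra.
Qed.

End tilde_gauss.

Theorem lemma18 (R : realType) :
  (forall (l p t : R), 0 < p < 1 -> 0 < t ->
     tilde_law l p [set x | t < `|x|] <= 2 * expR (- t ^+ 2 / K1 l ^+ 2))
  /\
  (exists C : R, 0 < C /\ forall (l p : R), 0 < p < 1 ->
     (tilde_psi2 l p <= (C * Num.max 1 `|l|)%:E)%E).
Proof.
split=> [l p t /andP[p0 p1] t0|].
  by apply: tilde_law_abs_gt_le => //; rewrite !ltW.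
exists 7; split=> // l p /andP[p0 p1].
by apply: tilde_psi2_le; rewrite !ltW.
Qed.
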